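(* Let $T$ be a tournament with $n$ vertices. Then in the dichromatic polynomial $P(T;x)$ the coefficient of $x^{n-1}$ is zero, and the coefficient of $x^{n-2}$ equals $-t$, where $t$ is the number of directed triangles of $T$.
   Context: A tournament is an orientation of a complete graph; a directed triangle is a directed cycle of length $3$. For a positive integer $k$, a proper $k$-coloring of a digraph $D$ is a map $c:V(D)\to\{1,\ldots,k\}$ such that each color class induces a subdigraph with no directed cycle. The number of proper $k$-colorings of $D$ is a polynomial in $k$, denoted $P(D;k)$ (the dichromatic polynomial). *)

From mathcomp Require Import all_boot all_order all_algebra.
Set Implicit Arguments. Unset Strict Implicit. Unset Printing Implicit Defensive.
Import GRing.Theory.
Local Open Scope ring_scope.

(* A digraph on a finite vertex type V is a relation E : rel V (E u v = arc u -> v). *)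

Definition is_tournament (V : finType) (E : rel V) : bool :=
  [forall u, ~~ E u u] && [forall u, forall v, (u != v) ==> (E u v != E v u)].

(* A directed cycle inside A: distinct vertices f 0, ..., f m (m+1 <= #|V|),
   all in A, with arcs f i -> f (i+1 mod m+1). *)
Definition has_dicycle (V : finType) (E : rel V) (A : {set V}) : bool :=
  [exists m : 'I_#|V|, exists f : {ffun 'I_m.+1 -> V},
     injectiveb f && [forall i, (f i \in A) && E (f i) (f (ordS i))]].

(* Proper k-colouring (colours 'I_k ~ {1..k}): every colour class induces
   an acyclic subdigraph. *)
Definition proper_coloring (V : finType) (E : rel V) (k : nat)
  (c : {ffun V -> 'I_k}) : bool :=
  [forall i : 'I_k, ~~ has_dicycle E [set v | c v == i]].

Definition num_colorings (V : finType) (E : rel V) (k : nat) : nat :=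
  #|[set c : {ffun V -> 'I_k} | proper_coloring E c]|.

Definition is_dichromatic_poly (V : finType) (E : rel V) (P : {poly rat}) : Prop :=
  forall k : nat, (0 < k)%N -> P.[k%:R] = (num_colorings E k)%:R.

(* Number of directed triangles (as 3-vertex subsets spanning a directed 3-cycle). *)
Definition num_dir_triangles (V : finType) (E : rel V) : nat :=
  #|[set S : {set V} | [exists a, exists b, exists c,
        (S == [set a; b; c]) && E a b && E b c && E c a]]|.

From mathcomp Require Import all_boot all_order all_algebra.
From mathcomp Require Import zify.
Import GRing.Theory Num.Theory.
Set Implicit Arguments. Unset Strict Implicit. Unset Printing Implicit Defensive.

(** In a tournament every directed cycle contains a directed triangle (a chord
    of a longer cycle always shortcuts it), so a colouring is proper exactly
    when no directed triangle is monochromatic.  Inclusion-exclusion over sets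
    J of directed triangles then gives
      P(T; k) = sum_J (-1)^|J| k^c(J),
    where c(J) is the number of connected components of the hypergraph on V
    with edge set J.  Now c(empty) = n, c({T}) = n - 2, and c(J) <= n - 3 as
    soon as J contains two distinct triangles; hence no term has degree n - 1,
    and the terms of degree n - 2 are exactly the singletons, each with
    sign -1. *)

Definition monochromatic (V : finType) k (c : {ffun V -> 'I_k}) (S : {set V}) :=
  [forall u in S, forall v in S, c u == c v].

Lemma monochromatic3 (V : finType) k (c : {ffun V -> 'I_k}) a b d :
  monochromatic c [set a; b; d] = (c a == c b) && (c b == c d).
Proof.
apply/forall_inP/andP => [mono | [/eqP cab /eqP cbd] u Su].
  have mono_in u v : u \in [set a; b; d] -> v \in [set a; b; d] -> c u == c v.
    by move=> Su Sv; exact: (forall_inP (mono u Su) v Sv).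
  by rewrite !mono_in ?inE ?eqxx ?orbT.
have cE x : x \in [set a; b; d] -> c x = c a.
  by rewrite !inE => /orP [/orP [] | ] /eqP ->; rewrite ?cab ?cbd.
by apply/forall_inP => v Sv; rewrite (cE _ Su) (cE _ Sv).
Qed.

Section Tournament.

Variables (V : finType) (E : rel V).
Hypothesis tourE : is_tournament E.

Lemma tournament_irrefl u : ~~ E u u.
Proof. by case/andP: tourE => /forallP. Qed.

Lemma tournament_asym u v : E u v -> ~~ E v u.
Proof.
move=> Euv; have [<-|neq] := eqVneq u v; first exact: tournament_irrefl.
case/andP: tourE => _ /forallP /(_ u) /forallP /(_ v).
by rewrite neq Euv; case: (E v u).
Qed.

Lemma tournament_total u v : u != v -> E u v || E v u.
Proof.
move=> neq; case/andP: tourE => _ /forallP /(_ u) /forallP /(_ v).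
by rewrite neq; case: (E u v); case: (E v u).
Qed.

Lemma tournament_neq u v : E u v -> u != v.
Proof. by apply: contraTneq => ->; exact: tournament_irrefl. Qed.

Definition has_dtriangle (A : {set V}) : bool :=
  [exists a, exists b, exists c,
     [&& a \in A, b \in A, c \in A, E a b, E b c & E c a]].

Lemma has_dtriangleP (A : {set V}) a b c :
  a \in A -> b \in A -> c \in A -> E a b -> E b c -> E c a -> has_dtriangle A.
Proof.
move=> Aa Ab Ac Eab Ebc Eca.
apply/existsP; exists a; apply/existsP; exists b; apply/existsP; exists c.
by rewrite Aa Ab Ac Eab Ebc Eca.
Qed.

(* If [g 2 = g 0] the walk shortcuts to [g 2, ..., g L]; otherwise the arc
   between [g 0] and [g 2] either closes a triangle with [g 1] or lets the
   walk skip [g 1]. *)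
Lemma closed_walk_dtriangle (A : {set V}) L (g : nat -> V) :
  0 < L -> g L = g 0 -> (forall i, i <= L -> g i \in A) ->
  (forall i, i < L -> E (g i) (g i.+1)) -> has_dtriangle A.
Proof.
elim/ltn_ind: L g => L IH g + gL gA gE.
case: L IH gL gA gE => [//|[|[|L]]] IH gL gA gE _.
- by have := gE 0 isT; rewrite gL (negbTE (tournament_irrefl _)).
- by have := gE 1 isT; rewrite gL (negbTE (tournament_asym (gE 0 isT))).
have [g20|g20] := eqVneq (g 2) (g 0).
  apply: (IH L.+1 _ (fun i => g i.+2)) => //= [|i Hi|i Hi]; first by rewrite gL g20.
  - exact: gA.
  - exact: gE.
case/orP: (tournament_total g20) => [E20|E02].
  by apply: (has_dtriangleP (gA 0 _) (gA 1 _) (gA 2 _) (gE 0 _) (gE 1 _) E20).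
apply: (IH L.+2 _ (fun i => if i is 0 then g 0 else g i.+1)) => //= -[|i] Hi //.
- exact: gA.
- exact: gA.
- exact: gE.
Qed.

Lemma has_dicycle_tournamentE (A : {set V}) : has_dicycle E A = has_dtriangle A.
Proof.
apply/idP/idP.
  case/existsP => m /existsP [f /andP [_ /forallP fAE]].
  pose g i := f (inord (i %% m.+1)).
  have gA i : g i \in A by case/andP: (fAE (inord (i %% m.+1))).
  have gE i : E (g i) (g i.+1).
    rewrite /g.
    have -> : (inord (i.+1 %% m.+1) : 'I_m.+1) = ordS (inord (i %% m.+1)).
      apply: val_inj; rewrite /= !inordK ?ltn_pmod //.
      by rewrite -[(i %% m.+1).+1]addn1 modnDml addn1.
    by case/andP: (fAE (inord (i %% m.+1))).
  by apply: (@closed_walk_dtriangle A m.+1 g) => //; rewrite /g modnn mod0n.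
case/existsP => a /existsP [b /existsP [c /and5P [Aa Ab Ac Eab /andP [Ebc Eca]]]].
have nab := tournament_neq Eab; have nbc := tournament_neq Ebc.
have nca := tournament_neq Eca.
pose f := [ffun i : 'I_3 => nth a [:: a; b; c] i].
have f_inj : injective f.
  move=> [[|[|[|i]]] Hi] [[|[|[|j]]] Hj] //=; rewrite !ffunE /= => fij;
    apply: val_inj => //=; by move: nab nbc nca; rewrite fij eqxx.
have two_lt : 2 < #|V| by rewrite -[3](card_ord 3) (leq_card _ f_inj).
apply/existsP; exists (Ordinal two_lt); apply/existsP; exists f.
rewrite (introT (injectiveP _) f_inj).
by apply/forallP => -[[|[|[|i]]] Hi] //=; rewrite !ffunE /= ?Aa ?Ab ?Ac.
Qed.

Definition dir_triangles : {set {set V}} :=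
  [set S : {set V} | [exists a, exists b, exists c,
     (S == [set a; b; c]) && E a b && E b c && E c a]].

Lemma card_dir_triangle T : T \in dir_triangles -> #|T| = 3.
Proof.
rewrite inE => /existsP [a /existsP [b /existsP [c]]].
case/andP => /andP [/andP [/eqP -> /tournament_neq nab] /tournament_neq nbc].
move=> /tournament_neq nca.
by rewrite -setUA cardsU1 cards2 nbc !inE negb_or nab eq_sym nca.
Qed.

Lemma proper_coloringE k (col : {ffun V -> 'I_k}) :
  proper_coloring E col = [forall S in dir_triangles, ~~ monochromatic col S].
Proof.
apply/forallP/forall_inP => [acyclic S | no_mono i].
  rewrite inE => /existsP [a /existsP [b /existsP [c]]].
  case/andP => /andP [/andP [/eqP -> Eab] Ebc] Eca.
  rewrite monochromatic3; apply: contraTN (acyclic (col a)) => /andP [/eqP ab /eqP bc].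
  by rewrite has_dicycle_tournamentE (has_dtriangleP _ _ _ Eab Ebc Eca) ?inE ?ab ?bc.
rewrite has_dicycle_tournamentE; apply/negP.
case/existsP => a /existsP [b /existsP [c /and5P [Aa Ab Ac Eab /andP [Ebc Eca]]]].
have abc_tri : [set a; b; c] \in dir_triangles.
  by rewrite inE; apply/existsP; exists a; apply/existsP; exists b; apply/existsP; exists c;
    rewrite eqxx Eab Ebc Eca.
rewrite !inE in Aa Ab Ac; move: (no_mono _ abc_tri).
by rewrite monochromatic3 (eqP Aa) (eqP Ab) (eqP Ac) !eqxx.
Qed.

End Tournament.

Section HypergraphComponents.

Variable V : finType.
Implicit Types (J : {set {set V}}) (S T : {set V}).

Definition hyper_adj J : rel V := fun u v => [exists S in J, (u \in S) && (v \in S)].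

Definition n_hcomp J : nat := n_comp (hyper_adj J) V.

Lemma hyper_adj_sym J : symmetric (hyper_adj J).
Proof.
by move=> u v; apply/exists_inP/exists_inP => -[S JS /andP [Su Sv]]; exists S; rewrite ?Su ?Sv.
Qed.

Lemma connect_hyper_adj_sym J : connect_sym (hyper_adj J).
Proof. exact/sym_connect_sym/hyper_adj_sym. Qed.

Lemma hyper_adj_connect J S x y :
  S \in J -> x \in S -> y \in S -> connect (hyper_adj J) x y.
Proof. by move=> JS Sx Sy; apply/connect1/exists_inP; exists S; rewrite ?Sx. Qed.

Lemma hyper_root_eq J S x y : S \in J -> x \in S -> y \in S ->
  fingraph.root (hyper_adj J) x = fingraph.root (hyper_adj J) y.
Proof.
move=> JS Sx Sy; apply/(fingraph.rootP (connect_hyper_adj_sym J)).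
exact: hyper_adj_connect JS Sx Sy.
Qed.

Lemma hyper_root_id J x :
  (forall S, S \in J -> x \notin S) -> fingraph.root (hyper_adj J) x = x.
Proof.
move=> notJx; have /connectP [[|y p] /= + ->] := connect_root (hyper_adj J) x => //.
by case/andP => /exists_inP [S JS /andP [Sx _]]; rewrite (negbTE (notJx S JS)) in Sx.
Qed.

Lemma monochromatic_connect J k (col : {ffun V -> 'I_k}) x y :
  [forall S in J, monochromatic col S] -> connect (hyper_adj J) x y -> col x = col y.
Proof.
move=> /forall_inP mono /connectP [p + ->]; elim: p x => [//|z p IHp] x /= /andP [xz zp].
case/exists_inP: xz => S JS /andP [Sx Sz]; rewrite -(IHp z zp).
by apply/eqP; move/forall_inP: (mono S JS) => /(_ x Sx) /forall_inP; apply.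
Qed.

Lemma card_monochromatic_colorings J k :
  #|[set col : {ffun V -> 'I_k} | [forall S in J, monochromatic col S]]| = k ^ n_hcomp J.
Proof.
set e := hyper_adj J; have e_sym := connect_hyper_adj_sym J.
pose rt v : {x | roots e x} := exist _ (fingraph.root e v) (introT eqP (root_root e_sym v)).
pose extend (d : {ffun {x | roots e x} -> 'I_k}) := [ffun v => d (rt v)].
have rtK x : rt (val x) = x by apply: val_inj; exact/eqP/(valP x).
have extend_inj : injective extend.
  move=> d1 d2 /ffunP d12; apply/ffunP => x.
  by have := d12 (val x); rewrite !ffunE rtK.
have -> : [set col | [forall S in J, monochromatic col S]] = extend @: setT.
  apply/setP => col; rewrite inE; apply/idP/imsetP => [mono | [d _ ->]].
    exists [ffun x => col (val x)] => //; apply/ffunP => v; rewrite !ffunE /=.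
    exact: monochromatic_connect mono (connect_root e v).
  apply/forall_inP => S JS; apply/forall_inP => u Su; apply/forall_inP => v Sv.
  by rewrite !ffunE; apply/eqP; congr (d _); apply: val_inj; exact: hyper_root_eq JS Su Sv.
rewrite card_imset // cardsT card_ffun card_ord card_sig; congr (_ ^ _).
by apply: eq_card => x; rewrite !inE andbT.
Qed.

Lemma n_hcomp0 : n_hcomp set0 = #|V|.
Proof.
apply: eq_card => x; rewrite !inE andbT; apply/eqP.
by apply: hyper_root_id => S; rewrite inE.
Qed.

Lemma n_hcomp1 T : T != set0 -> n_hcomp [set T] = #|~: T|.+1.
Proof.
case/set0Pn => a Ta; set e := hyper_adj [set T].
have T_connect : T =i connect e a.
  move=> y; apply/idP/idP => [Ty|]; first exact: hyper_adj_connect (set11 T) Ta Ty.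
  have T_closed : closed e T.
    by move=> u v /exists_inP [S /set1P -> /andP [Tu Tv]]; rewrite Tu Tv.
  by move/(closed_connect T_closed); rewrite Ta.
rewrite /n_hcomp (n_compC T) (eq_n_comp_r T_connect).
rewrite (n_comp_connect (connect_hyper_adj_sym _)).
rewrite add1n; congr _.+1; apply: eq_card => x; rewrite !inE.
case Tx : (x \in T); rewrite /= ?andbF // andbT.
by apply/eqP/hyper_root_id => S /set1P ->; rewrite Tx.
Qed.

Lemma n_hcomp_le J T1 T2 m : T1 \in J -> T2 \in J -> T1 != T2 ->
  #|T1| = m -> #|T2| = m -> 1 < m -> n_hcomp J <= #|V| - m.
Proof.
move=> JT1 JT2 T12 cardT1 cardT2 m_gt1; set e := hyper_adj J.
have [a1 T1a1] : exists a, a \in T1 by apply/set0Pn; rewrite -card_gt0 cardT1 ltnW.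
have [a2 T2a2] : exists a, a \in T2 by apply/set0Pn; rewrite -card_gt0 cardT2 ltnW.
set r1 := fingraph.root e a1; set r2 := fingraph.root e a2.
have roots_sub : predI (roots e) (mem V) \subset ~: (T1 :|: T2) :|: [set r1; r2].
  apply/subsetP => x; rewrite !inE andbT => /eqP rx.
  case T1x : (x \in T1); first by rewrite -rx /r1 (hyper_root_eq JT1 T1x T1a1) eqxx !orbT.
  case T2x : (x \in T2); first by rewrite -rx /r2 (hyper_root_eq JT2 T2x T2a2) eqxx !orbT.
  by [].
have meet_roots : 0 < #|T1 :&: T2| -> r1 = r2.
  case/card_gt0P => u /setIP [T1u T2u].
  by rewrite /r1 /r2 (hyper_root_eq JT1 T1a1 T1u) (hyper_root_eq JT2 T2a2 T2u).
have meet_lt : #|T1 :&: T2| < m.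
  rewrite ltnNge; apply: contra T12 => meet_ge.
  have /eqP <- : T1 :&: T2 == T1 by rewrite eqEcard subsetIl cardT1.
  by rewrite eqEcard subsetIr cardT2.
have le_roots : n_hcomp J <= #|~: (T1 :|: T2)| + (r1 != r2).+1.
  apply: leq_trans (subset_leq_card roots_sub) _; rewrite -cards2.
  exact: (leq_card_setU _ _).1.
have := cardsUI T1 T2; rewrite -(cardsC (T1 :|: T2)) cardT1 cardT2.
move: le_roots; have [r12|r12] := eqVneq r1 r2; first lia.
have meet0 : #|T1 :&: T2| = 0.
  by apply/eqP; rewrite -leqn0 leqNgt; apply: contra r12 => /meet_roots ->.
lia.
Qed.

End HypergraphComponents.

Local Open Scope ring_scope.

Lemma natr_forall_in (R : pzSemiRingType) (I : finType) (A : {pred I}) (P : pred I) :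
  [forall i in A, P i]%:R = \prod_(i in A) (P i)%:R :> R.
Proof.
rewrite -big_andE; apply: (big_morph (fun b : bool => b%:R)) => // a b.
by case: a; case: b; rewrite /= ?mulr1 ?mulr0.
Qed.

Lemma prodr1B_subsets (R : comPzRingType) (I : finType) (A : {set I}) (x : I -> R) :
  \prod_(i in A) (1 - x i) = \sum_(B : {set I} | B \subset A) (-1) ^+ #|B| * \prod_(i in B) x i.
Proof.
have split1 i : (if i \in A then 1 - x i else 1) = (if i \in A then - x i else 0) + 1.
  by case: ifP; rewrite ?add0r // addrC.
rewrite big_mkcond (eq_bigr _ (fun i _ => split1 i)) bigA_distr [RHS]big_mkcond.
apply: eq_bigr => B _ /=.
have [/subsetP BA | /subsetPn [i Bi notAi]] := boolP (B \subset A); last first.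
  by rewrite (bigD1 i) //= Bi (negbTE notAi) mul0r.
by rewrite -big_mkcond -prodrN; apply: eq_bigr => i /BA ->.
Qed.

Lemma card_subsets1 (I : finType) (A : {set I}) :
  #|[set B : {set I} | B \subset A & #|B| == 1%N]| = #|A|.
Proof.
rewrite -[RHS](card_imset _ set1_inj); apply: eq_card => B; rewrite inE.
apply/andP/imsetP => [[BA /cards1P [i Bi]] | [i Ai ->]].
  by exists i; rewrite // -sub1set -Bi.
by rewrite sub1set cards1.
Qed.

Lemma eq_poly_natr (R : numDomainType) (p q : {poly R}) :
  (forall k, (0 < k)%N -> p.[k%:R] = q.[k%:R]) -> p = q.
Proof.
move=> pq; apply/eqP; rewrite -subr_eq0; apply/eqP.
apply: (@roots_geq_poly_eq0 _ _ [seq i.+1%:R | i <- iota 0 (size (p - q))]).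
- by apply/allP => _ /mapP [i _ ->]; rewrite /root !hornerE pq ?subrr.
- by rewrite map_inj_uniq ?iota_uniq // => i j /eqP; rewrite eqr_nat => /eqP [].
- by rewrite size_map size_iota.
Qed.

Section AvoidingPolynomial.

Variables (V : finType) (F : {set {set V}}).
Implicit Types (J : {set {set V}}) (T : {set V}).

Lemma card_colorings_avoiding (R : comPzRingType) k :
  #|[set col : {ffun V -> 'I_k} | [forall S in F, ~~ monochromatic col S]]|%:R
  = \sum_(J : {set {set V}} | J \subset F) (-1) ^+ #|J| * (k ^ n_hcomp J)%:R :> R.
Proof.
have card_natr (P : pred {ffun V -> 'I_k}) :
    #|[set col | P col]|%:R = \sum_col (P col)%:R :> R.
  by rewrite -sum1dep_card natr_sum big_mkcond; apply: eq_bigr => col _; case: (P col).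
rewrite card_natr.
under eq_bigr => col _.
  rewrite natr_forall_in (eq_bigr (fun S => 1 - (monochromatic col S)%:R)); last first.
    by move=> S _; case: (monochromatic col S); rewrite ?subrr ?subr0.
  rewrite prodr1B_subsets.
  over.
rewrite exchange_big; apply: eq_bigr => J _ /=.
rewrite -mulr_sumr -card_monochromatic_colorings card_natr.
by under eq_bigr do rewrite -natr_forall_in.
Qed.

Definition avoiding_poly (R : nzRingType) : {poly R} :=
  \sum_(J : {set {set V}} | J \subset F) (-1) ^+ #|J| *: 'X^(n_hcomp J).

Lemma horner_avoiding_poly (R : comNzRingType) k :
  (avoiding_poly R).[k%:R]
  = #|[set col : {ffun V -> 'I_k} | [forall S in F, ~~ monochromatic col S]]|%:R.
Proof.
rewrite card_colorings_avoiding horner_sum; apply: eq_bigr => J _.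
by rewrite hornerZ hornerXn natrX.
Qed.

Lemma coef_avoiding_poly (R : nzRingType) j :
  (avoiding_poly R)`_j
  = \sum_(J : {set {set V}} | J \subset F) (-1) ^+ #|J| * (j == n_hcomp J)%:R.
Proof. by rewrite coef_sum; apply: eq_bigr => J _; rewrite coefZ coefXn. Qed.

Hypothesis F3 : forall T, T \in F -> #|T| = 3%N.

Lemma n_hcomp_subset3 J : J \subset F ->
  [/\ #|J| = 0%N -> n_hcomp J = #|V|, #|J| = 1%N -> (n_hcomp J + 2 = #|V|)%N
    & (1 < #|J|)%N -> (n_hcomp J + 3 <= #|V|)%N].
Proof.
move=> /subsetP JF; split.
- by move/eqP; rewrite cards_eq0 => /eqP ->; exact: n_hcomp0.
- move/eqP/cards1P => -[T J1]; have T3 : #|T| = 3%N by rewrite F3 // JF // J1 set11.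
  rewrite J1 n_hcomp1 -?card_gt0 ?T3 // -(cardsC T) T3; lia.
- case/card_gt1P => T1 [T2 [JT1 JT2 T12]].
  have := n_hcomp_le JT1 JT2 T12 (F3 (JF _ JT1)) (F3 (JF _ JT2)) isT.
  have := max_card (mem T1); rewrite F3 ?JF //; lia.
Qed.

Lemma coef_avoiding_poly_pred (R : nzRingType) :
  (0 < #|V|)%N -> (avoiding_poly R)`_#|V|.-1 = 0.
Proof.
move=> V_gt0; rewrite coef_avoiding_poly big1 // => J /n_hcomp_subset3 [J0 J1 J2].
suff /negbTE -> : #|V|.-1 != n_hcomp J by rewrite mulr0.
case: #|J| J0 J1 J2 => [|[|m]] J0 J1 J2; lia.
Qed.

Lemma coef_avoiding_poly_subn2 (R : nzRingType) :
  (1 < #|V|)%N -> (avoiding_poly R)`_(#|V| - 2) = - #|F|%:R.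
Proof.
move=> V_gt1; rewrite coef_avoiding_poly.
rewrite (eq_bigr (fun J => - (#|J| == 1%N)%:R)) => [|J /n_hcomp_subset3 [J0 J1 J2]];
  last first.
  case: #|J| J0 J1 J2 => [|[|m]] J0 J1 J2.
  - by rewrite J0 // (_ : (_ == _) = false) ?mulr0 ?oppr0 //; lia.
  - by rewrite (_ : (_ == _) = true) ?expr1 ?mulN1r //; lia.
  - by rewrite (_ : (_ == _) = false) ?mulr0 ?oppr0 //; lia.
by rewrite sumrN -natr_sum -big_mkcondr /= sum1dep_card card_subsets1.
Qed.

End AvoidingPolynomial.

Unset Implicit Arguments.

Theorem mainTheorem8 (V : finType) (E : rel V) :
  is_tournament E ->
  (exists P : {poly rat}, is_dichromatic_poly E P) /\
  (forall P : {poly rat}, is_dichromatic_poly E P ->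
     ((0 < #|V|)%N -> P`_(#|V|.-1) = 0) /\
     ((1 < #|V|)%N -> P`_(#|V| - 2) = - (num_dir_triangles E)%:R)).
Proof.
move=> tourE; have F3 := card_dir_triangle tourE.
have avoiding_dichromatic : is_dichromatic_poly E (avoiding_poly (dir_triangles E) rat).
  move=> k _; rewrite horner_avoiding_poly; congr _%:R; apply: eq_card => col.
  by rewrite !inE proper_coloringE.
split; first by exists (avoiding_poly (dir_triangles E) rat).
move=> P dichP; have -> : P = avoiding_poly (dir_triangles E) rat.
  by apply: eq_poly_natr => k k_gt0; rewrite dichP ?avoiding_dichromatic.
split; first exact: (coef_avoiding_poly_pred F3).
exact: (coef_avoiding_poly_subn2 F3).
Qed.
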